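(* Let $A \in \mathbb{R}^{n\times n}$, $B\in\mathbb{R}^{n\times m}$, $C\in\mathbb{R}^{p\times n}$, and consider the deterministic linear system $x_{k+1}=Ax_k+Bu_k$, $y_k=Cx_k$, with constant reference $r_k = r_{ss}\in\mathbb{R}^p$. Let $Q\in\mathbb{R}^{p\times p}$ and $R\in\mathbb{R}^{m\times m}$ be positive definite. Assume that the pair $(A,\sqrt{Q}\,C)$ is observable and the pair $(A,B)$ is controllable. Let $(x_{ss},u_{ss})$ be a steady-state pair satisfying $$\begin{bmatrix} A-I & B\\ C & \mathbf{0}\end{bmatrix}\begin{bmatrix} x_{ss}\\ u_{ss}\end{bmatrix}=\begin{bmatrix}\mathbf{0}\\ r_{ss}\end{bmatrix},$$ and define the deviation variables $\tilde x_k=x_k-x_{ss}$, $\tilde u_k=u_k-u_{ss}$ (so that $\tilde x_{k+1}=A\tilde x_k+B\tilde u_k$). Define the stage cost $C(x_k,u_k)=x_k^\top C^\top Q C x_k+u_k^\top R u_k$, the steady-state cost $C_{ss}=x_{ss}^\top C^\top QC x_{ss}+u_{ss}^\top R u_{ss}$, and the cost index $$J(\tilde x_0)=\sum_{k=0}^\infty \left|C(x_k,u_k)-C_{ss}\right|.$$ Then there exists a value function $V(\tilde x_k)$ (namely the optimal cost $V(\tilde x_0)=\inf_{\{\tilde u_k\}} J(\tilde x_0)$, which is finite for all $\tilde x_0$) that satisfies the Bellman equation $$V(\tilde x_k)=\min_{\{u_k\}_{k=0}^\infty}\left\{\left|C(x_k,u_k)-C_{ss}\right|+V(\tilde x_{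k+1})\right\}.$$
   Context: This is an average-reward/cost formulation of optimal tracking control: the term $C_{ss}$ plays the role of the average cost, subtracted from the stage cost so that the infinite-horizon sum can be finite even though $u_k$ converges to a nonzero steady-state value $u_{ss}$. $I$ and $\mathbf{0}$ denote identity and zero matrices of appropriate dimensions. *)

From HB Require Import structures.
From mathcomp Require Import all_boot all_order all_algebra.
From mathcomp Require Import all_classical all_reals all_analysis.
Set Implicit Arguments. Unset Strict Implicit. Unset Printing Implicit Defensive.
Import Order.TTheory GRing.Theory Num.Theory.
Local Open Scope ring_scope.

Section Defs.
Variable R : realType.

Definition posdef (k : nat) (M : 'M[R]_k) : Prop :=
  M^T = M /\ forall x : 'cV[R]_k, x != 0 -> 0 < (x^T *m M *m x) 0 0.
Definition possemidef (k : nat) (M : 'M[R]_k) : Prop :=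
  M^T = M /\ forall x : 'cV[R]_k, 0 <= (x^T *m M *m x) 0 0.

Definition controllable (n m : nat) (A : 'M[R]_n) (B : 'M[R]_(n, m)) : Prop :=
  \rank (\mxrow_(i < n) (A ^+ i *m B)) = n.
Definition observable (n p : nat) (A : 'M[R]_n) (C : 'M[R]_(p, n)) : Prop :=
  \rank (\mxcol_(i < n) (C *m A ^+ i)) = n.

Fixpoint traj (n m : nat) (A : 'M[R]_n) (B : 'M[R]_(n, m)) (x0 : 'cV[R]_n)
  (u : nat -> 'cV[R]_m) (k : nat) : 'cV[R]_n :=
  match k with
  | 0 => x0
  | k'.+1 => A *m traj A B x0 u k' + B *m u k'
  end.

Definition stage (n m p : nat) (C : 'M[R]_(p, n)) (Q : 'M[R]_p) (Rw : 'M[R]_m)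
  (x : 'cV[R]_n) (u : 'cV[R]_m) : R :=
  (x^T *m C^T *m Q *m C *m x + u^T *m Rw *m u) 0 0.

(* cost index J(x~0) = sum_k |C(x_k,u_k) - C_ss|, for deviation initial state
   xt0 and deviation input sequence ut, with x_k = x~_k + x_ss, u_k = u~_k + u_ss *)
Definition Jcost (n m p : nat) (A : 'M[R]_n) (B : 'M[R]_(n, m)) (C : 'M[R]_(p, n))
  (Q : 'M[R]_p) (Rw : 'M[R]_m) (xss : 'cV[R]_n) (uss : 'cV[R]_m)
  (xt0 : 'cV[R]_n) (ut : nat -> 'cV[R]_m) : \bar R :=
  \sum_(0 <= k <oo)
    (`| stage C Q Rw (traj A B xt0 ut k + xss) (ut k + uss)
        - stage C Q Rw xss uss |)%:E.

Definition Vopt (n m p : nat) (A : 'M[R]_n) (B : 'M[R]_(n, m)) (C : 'M[R]_(p, n))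
  (Q : 'M[R]_p) (Rw : 'M[R]_m) (xss : 'cV[R]_n) (uss : 'cV[R]_m)
  (xt0 : 'cV[R]_n) : \bar R :=
  ereal_inf [set Jcost A B C Q Rw xss uss xt0 ut | ut in [set: nat -> 'cV[R]_m]].

End Defs.

From mathcomp Require Import all_boot all_order all_algebra.
From mathcomp Require Import all_classical all_reals all_analysis.
From mathcomp Require Import lra.
Import Order.TTheory GRing.Theory Num.Theory.
Import numFieldNormedType.Exports.
Set Implicit Arguments. Unset Strict Implicit. Unset Printing Implicit Defensive.
Local Open Scope ring_scope.

(** Steering the deviation state to the origin in [n] steps (controllability)
    and applying [u_ss] afterwards makes all but finitely many terms of [J]
    vanish, so [V] is finite.  The inequality
    [V x <= |C(x, u) - C_ss| + V (A x + B (u - u_ss))] is the one-step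
    decomposition of [J].  For equality one needs an optimal input sequence:
    along a minimizing sequence every term of [J] is bounded, so by positive
    definiteness of the input weight all inputs lie in a fixed box, which is
    compact in the product topology (Tychonoff); there [J], a supremum of
    continuous partial sums, is lower semicontinuous, hence attains its
    infimum.  The first input
    of an optimal sequence attains the minimum in the Bellman equation. *)

Section EntrywiseContinuity.
Variables (R : realType) (T : topologicalType).

Definition entrywise_continuous a b (F : T -> 'M[R]_(a, b)) :=
  forall i j, continuous (fun t => F t i j).

Lemma continuous_sumr k (f : 'I_k -> T -> R) :
  (forall i, continuous (f i)) -> continuous (fun t => \sum_(i < k) f i t).
Proof.
move=> fc; have -> : (fun t => \sum_(i < k) f i t) = \sum_(i < k) f i.
  by apply: funext => t; rewrite fct_sumE.
apply: (big_ind (fun h : T -> R => continuous h)) => // [|g h gc hc x].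
  exact: cst_continuous.
exact: (@continuousD _ _ _ g h x (gc x) (hc x)).
Qed.

Lemma entrywise_continuous_cst a b (M : 'M[R]_(a, b)) :
  entrywise_continuous (fun=> M).
Proof. by move=> i j; exact: cst_continuous. Qed.

Lemma entrywise_continuousD a b (F G : T -> 'M[R]_(a, b)) :
  entrywise_continuous F -> entrywise_continuous G ->
  entrywise_continuous (fun t => F t + G t).
Proof.
move=> Fc Gc i j; under eq_fun do rewrite mxE.
by move=> x; exact: (@continuousD _ _ _ (fun t => F t i j) (fun t => G t i j) x
  (Fc i j x) (Gc i j x)).
Qed.

Lemma entrywise_continuous_mulmx a b c (F : T -> 'M[R]_(a, b))
  (G : T -> 'M[R]_(b, c)) :
  entrywise_continuous F -> entrywise_continuous G ->
  entrywise_continuous (fun t => F t *m G t).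
Proof.
move=> Fc Gc i j; under eq_fun do rewrite mxE.
apply: continuous_sumr => l x.
exact: (@continuousM _ _ (fun t => F t i l) (fun t => G t l j) x
  (Fc i l x) (Gc l j x)).
Qed.

Lemma entrywise_continuous_tr a b (F : T -> 'M[R]_(a, b)) :
  entrywise_continuous F -> entrywise_continuous (fun t => (F t)^T).
Proof. by move=> Fc i j; under eq_fun do rewrite mxE; exact: Fc. Qed.

End EntrywiseContinuity.

Section Trajectory.
Variables (R : realType) (n m : nat) (A : 'M[R]_n) (B : 'M[R]_(n, m)).

Lemma traj_shift x0 u k :
  traj A B x0 u k.+1 = traj A B (A *m x0 + B *m u 0%N) (fun j => u j.+1) k.
Proof.
elim: k => [//|k IH].
by rewrite -[LHS]/(A *m traj A B x0 u k.+1 + B *m u k.+1) IH.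
Qed.

Lemma traj_sum x0 u k :
  traj A B x0 u k = A ^+ k *m x0 + \sum_(i < k) A ^+ (k - i.+1) *m B *m u i.
Proof.
have AS j : A ^+ j.+1 = A *m A ^+ j by rewrite exprS mulmxE.
elim: k => [|k IH]; first by rewrite big_ord0 expr0 mul1mx addr0.
rewrite -[LHS]/(A *m traj A B x0 u k + B *m u k) IH big_ord_recr /= subnn.
rewrite expr0 mul1mx mulmxDr mulmxA -AS addrA mulmx_sumr; congr (_ + _ + _).
by apply: eq_bigr => i _; rewrite !mulmxA -AS subSS -subSn ?subSS.
Qed.

Lemma traj_stays0 x0 u k :
  traj A B x0 u k = 0 -> (forall j, (k <= j)%N -> u j = 0) ->
  forall d, traj A B x0 u (k + d) = 0.
Proof.
move=> xk0 u0; elim=> [|d IH]; first by rewrite addn0.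
by rewrite addnS /= IH u0 ?leq_addr // !mulmx0 addr0.
Qed.

Lemma controllable_steer0 x0 : controllable A B ->
  exists u, traj A B x0 u n = 0 /\ forall k, (n <= k)%N -> u k = 0.
Proof.
rewrite /controllable => fullrk; set K := \mxrow_(i < n) _ in fullrk.
have /submxP [w Kw] : ((- (A ^+ n *m x0))^T <= K^T)%MS.
  by apply: submx_full; rewrite /row_full mxrank_tr fullrk.
(* The block of [w] that multiplies [A ^+ i *m B] is the input at time
   [n - 1 - i]; after time [n] the input is zero. *)
pose u k : 'cV[R]_m :=
  if insub k is Some i then submxcol w^T (rev_ord i) else 0.
have uE (i : 'I_n) : u i = submxcol w^T (rev_ord i) by rewrite /u valK.
exists u; split => [|k nk]; last by rewrite /u insubN // -leqNgt.
rewrite traj_sum; apply/eqP; rewrite addrC addr_eq0; apply/eqP.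
rewrite -[RHS]trmxK Kw trmx_mul trmxK -(submxcolK w^T) mul_mxrow_mxcol.
rewrite (reindex_inj rev_ord_inj); apply: eq_bigr => j _.
by rewrite uE rev_ordK /= subnSK // subKn // ltnW.
Qed.

Lemma entrywise_continuous_traj (T : topologicalType)
  (u : T -> nat -> 'cV[R]_m) x0 :
  (forall k, entrywise_continuous (fun t => u t k)) -> forall k, entrywise_continuous (fun t => traj A B x0 (u t) k).
Proof.
move=> uc; elim=> [|k IH]; first exact: entrywise_continuous_cst.
by apply: entrywise_continuousD; apply: entrywise_continuous_mulmx => //;
  exact: entrywise_continuous_cst.
Qed.

End Trajectory.

Section MatrixForm.
Variables (R : realType) (k : nat).
Implicit Types (M : 'M[R]_k) (a c w : 'cV[R]_k).

Definition mxform M a c : R := (a^T *m M *m c) 0 0.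

Lemma mxformBl M a a' c : mxform M (a - a') c = mxform M a c - mxform M a' c.
Proof. by rewrite /mxform linearB /= !mulmxBl !mxE. Qed.

Lemma mxformBr M a c c' : mxform M a (c - c') = mxform M a c - mxform M a c'.
Proof. by rewrite /mxform !mulmxBr !mxE. Qed.

Lemma mxformZl M x a c : mxform M (x *: a) c = x * mxform M a c.
Proof. by rewrite /mxform linearZ /= -!scalemxAl mxE. Qed.

Lemma mxformZr M x a c : mxform M a (x *: c) = x * mxform M a c.
Proof. by rewrite /mxform -!scalemxAr mxE. Qed.

Lemma mxformC M a c : M^T = M -> mxform M a c = mxform M c a.
Proof.
move=> Msym; rewrite /mxform -[in RHS](trmxK (c^T *m M *m a)) [in RHS]mxE.
by rewrite !trmx_mul Msym trmxK mulmxA.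
Qed.

Lemma posdef_mxform_ge0 M w : posdef M -> 0 <= mxform M w w.
Proof.
move=> [_ Mpos]; have [->|w0] := eqVneq w 0; first by rewrite /mxform mulmx0 mxE.
exact/ltW/Mpos.
Qed.

Lemma posdef_unitmx M : posdef M -> M \in unitmx.
Proof.
move=> [_ Mpos]; rewrite unitmxE unitfE; apply/negP => /det0P [v v0 vM].
have vT0 : v^T != 0 by apply: contra v0 => /eqP vT0; rewrite -[v]trmxK vT0 trmx0.
by have := Mpos _ vT0; rewrite trmxK vM mul0mx mxE ltxx.
Qed.

(* Cauchy-Schwarz for the inner product [mxform M] against [b := M^-1 e_i],
   whose pairing with [w] is the coordinate [w i 0]. *)
Lemma posdef_coord_sqr_le M i : posdef M ->
  exists2 d : R, 0 < d & forall w, w i 0 ^+ 2 <= mxform M w w * d.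
Proof.
move=> Mpd; pose b := invmx M *m delta_mx i (0 : 'I_1).
have Mb : M *m b = delta_mx i 0 by rewrite mulmxA mulmxV ?posdef_unitmx ?mul1mx.
have b0 : b != 0.
  apply/negP => /eqP b0; move: Mb; rewrite b0 mulmx0 => /matrixP /(_ i 0).
  by rewrite !mxE !eqxx => /eqP; rewrite eq_sym oner_eq0.
have mwb w : mxform M w b = w i 0.
  rewrite /mxform -mulmxA Mb mxE (bigD1 i) //= big1 ?addr0 => [|j ji].
    by rewrite !mxE !eqxx mulr1.
  by rewrite !mxE (negbTE ji) mulr0.
have d0 : 0 < mxform M b b by exact: Mpd.2.
exists (mxform M b b) => // w; set d := mxform M b b in d0 *.
have := posdef_mxform_ge0 (d *: w - w i 0 *: b) Mpd.
rewrite mxformBl !mxformBr !mxformZl !mxformZr -/d (mxformC b w Mpd.1) !mwb.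
nra.
Qed.

Lemma posdef_sublevel_bounded M (c : R) : posdef M ->
  exists r : 'I_k -> R, forall w, mxform M w w <= c -> forall i, `|w i 0| <= r i.
Proof.
move=> Mpd; have /choice [d dP] : forall i, exists d : R,
    0 < d /\ forall w, w i 0 ^+ 2 <= mxform M w w * d.
  by move=> i; have [d d0 dP] := posdef_coord_sqr_le i Mpd; exists d.
exists (fun i => c * d i + 1) => w qc i; have [d0 /(_ w) wd] := dP i.
have : w i 0 ^+ 2 <= c * d i by apply: le_trans wd _; rewrite ler_pM2r.
rewrite -real_normK ?num_real //; have := normr_ge0 (w i 0); nra.
Qed.

End MatrixForm.

Section LowerSemicontinuousMinimum.
Local Open Scope classical_set_scope.

Lemma lsc_inf_attained_on_box (R : realType) (I : eqType) (r : I -> R)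
  (J : {ptws I -> R} -> \bar R) (f : nat -> {ptws I -> R} -> R) (v : R) :
  (forall N, continuous (f N)) ->
  (forall g N, ((f N g)%:E <= J g)%E) ->
  (forall g c, (forall N, ((f N g)%:E <= c)%E) -> (J g <= c)%E) ->
  (forall e, 0 < e ->
     exists2 g, (forall i, `|g i| <= r i) & (J g <= (v + e)%:E)%E) ->
  exists g, (J g <= v%:E)%E.
Proof.
move=> fc fJ Jsup approx.
set box := [set g : {ptws I -> R} | forall i, `[- r i, r i] (g i)].
have box_compact : compact box :=
  tychonoff (fun i => @segment_compact R (- r i) (r i)).
pose sublevel e := [set g | box g /\ (J g <= (v + e)%:E)%E].
pose F := filter_from [set e : R | 0 < e] sublevel.
have FF : ProperFilter F.
  apply: filter_from_proper => [|e /= e0].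
    apply: filter_from_filter; first by exists 1; rewrite /= ltr01.
    move=> e1 e2 /= e10 e20; exists (Num.min e1 e2).
      by rewrite /= lt_min e10.
    move=> g [boxg Jg]; split; split => //; apply: (le_trans Jg);
      by rewrite lee_fin lerD2l ge_min lexx ?orbT.
  have [g gr Jg] := approx e e0; exists g; split => // i.
  by rewrite /= in_itv /= -ler_norml.
have [g [_ clg]] : exists g, box g /\ cluster F g.
  by apply: box_compact; exists 1; rewrite /= ?ltr01 // => g [].
exists g; apply: Jsup => N; rewrite lee_fin; apply/ler_addgt0Pr => e e0.
rewrite leNgt; apply/negP => fg.
(* [g] clusters the sublevel sets, on which [f N <= J <= v + e], and [f N] is
   continuous at [g]. *)
have fgt : nbhs g (f N @^-1` [set y | v + e < y]).
  by apply: fc; apply: open_nbhs_nbhs; split => //; exact: open_gt.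
have Fe : F (sublevel e) by exists e.
have [h [[_ Jh] /= fh]] := clg _ _ Fe fgt.
by have := le_trans (fJ h N) Jh; rewrite lee_fin leNgt fh.
Qed.

End LowerSemicontinuousMinimum.

Section Cost.
Variables (R : realType) (n m p : nat) (A : 'M[R]_n) (B : 'M[R]_(n, m))
  (C : 'M[R]_(p, n)) (Q : 'M[R]_p) (Rw : 'M[R]_m)
  (xss : 'cV[R]_n) (uss : 'cV[R]_m).

Local Notation J := (Jcost A B C Q Rw xss uss).
Local Notation V := (Vopt A B C Q Rw xss uss).

Lemma stage_ge_input x u : posdef Q -> mxform Rw u u <= stage C Q Rw x u.
Proof.
move=> Qpd; rewrite /stage mxE lerDr.
have -> : x^T *m C^T *m Q *m C *m x = (C *m x)^T *m Q *m (C *m x).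
  by rewrite trmx_mul !mulmxA.
exact: posdef_mxform_ge0.
Qed.

Lemma continuous_stage (T : topologicalType) (X : T -> 'cV[R]_n)
  (U : T -> 'cV[R]_m) :
  entrywise_continuous X -> entrywise_continuous U ->
  continuous (fun t => stage C Q Rw (X t) (U t)).
Proof.
move=> Xc Uc; apply: (_ : entrywise_continuous _) 0 0.
by do ![apply: entrywise_continuousD | apply: entrywise_continuous_mulmx
       | apply: entrywise_continuous_tr | exact: entrywise_continuous_cst].
Qed.

Definition stage_gap xt ut k : R :=
  `| stage C Q Rw (traj A B xt ut k + xss) (ut k + uss) - stage C Q Rw xss uss |.

Lemma stage_gap_ge0 xt ut k : 0 <= stage_gap xt ut k.
Proof. exact: normr_ge0. Qed.

Lemma JcostE xt ut : J xt ut = (\sum_(0 <= k <oo) (stage_gap xt ut k)%:E)%E.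
Proof. by []. Qed.

Lemma Jcost_recl xt ut :
  J xt ut = ((stage_gap xt ut 0)%:E
             + J (A *m xt + B *m ut 0%N) (fun k => ut k.+1))%E.
Proof.
have gap_ge0 xt' ut' k : (0 <= (stage_gap xt' ut' k)%:E)%E.
  by rewrite lee_fin stage_gap_ge0.
rewrite !JcostE nneseries_recl // -(nneseries_addn 1) //; congr (_ + _)%E.
by apply: eq_eseriesr => k _; rewrite /stage_gap addn1 traj_shift.
Qed.

Lemma Jcost_ge_partial xt ut N :
  ((\sum_(k < N) stage_gap xt ut k)%:E <= J xt ut)%E.
Proof.
rewrite JcostE -sumEFin -(big_mkord xpredT (fun k => (stage_gap xt ut k)%:E)).
by apply: nneseries_lim_ge => *; rewrite lee_fin stage_gap_ge0.
Qed.

Lemma stage_gap_le_Jcost xt ut k : ((stage_gap xt ut k)%:E <= J xt ut)%E.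
Proof.
apply: le_trans (Jcost_ge_partial xt ut k.+1).
by rewrite lee_fin big_ord_recr /= lerDr sumr_ge0 // => j _; exact: stage_gap_ge0.
Qed.

Lemma Jcost_le_ub_partial xt ut c :
  (forall N, ((\sum_(k < N) stage_gap xt ut k)%:E <= c)%E) -> (J xt ut <= c)%E.
Proof.
move=> partial_le; rewrite JcostE; apply: lime_le.
  by apply: is_cvg_nneseries => *; rewrite lee_fin stage_gap_ge0.
by apply: nearW => N; rewrite big_mkord sumEFin.
Qed.

Lemma Jcost_ge0 xt ut : (0 <= J xt ut)%E.
Proof. by apply: nneseries_ge0 => *; rewrite lee_fin stage_gap_ge0. Qed.

Lemma Vopt_ge0 xt : (0 <= V xt)%E.
Proof. by apply/ereal_infP => _ [ut _ <-]; exact: Jcost_ge0. Qed.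

Lemma Vopt_le_Jcost xt ut : (V xt <= J xt ut)%E.
Proof. by apply: ereal_inf_lbound; exists ut. Qed.

Lemma Vopt_le_bellman xt u :
  (V xt <= (`| stage C Q Rw (xt + xss) u - stage C Q Rw xss uss |)%:E
           + V (A *m xt + B *m (u - uss)))%E.
Proof.
rewrite -leeBlDl //; apply/ereal_infP => _ [ut _ <-]; rewrite leeBlDl //.
pose ut' k := if k is k'.+1 then ut k' else u - uss.
by have := Vopt_le_Jcost xt ut'; rewrite Jcost_recl /stage_gap /= subrK.
Qed.

Lemma Vopt_fin_num xt : controllable A B -> V xt \is a fin_num.
Proof.
move=> ctrl; have [ut [xn0 ut0]] := controllable_steer0 xt ctrl.
have Jfin : J xt ut = (\sum_(0 <= k < n) stage_gap xt ut k)%:E.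
  rewrite JcostE (nneseries_split 0 n) => [|k _]; last first.
    by rewrite lee_fin stage_gap_ge0.
  rewrite add0n [X in (_ + X)%E]eseries0 => [|i /subnKC <- _].
    by rewrite adde0 sumEFin.
  by rewrite /stage_gap traj_stays0 // ut0 ?leq_addr // !add0r subrr normr0.
rewrite ge0_fin_numE ?Vopt_ge0 //; apply: le_lt_trans (Vopt_le_Jcost xt ut) _.
by rewrite Jfin ltry.
Qed.

Lemma stage_gap_input_bounded c : posdef Q -> posdef Rw ->
  exists r : 'I_m -> R, forall xt ut k,
    stage_gap xt ut k <= c -> forall i, `|ut k i 0| <= r i.
Proof.
move=> Qpd Rpd; set Css := stage C Q Rw xss uss.
have [r rP] := posdef_sublevel_bounded (Css + c) Rpd.
exists (fun i => r i + `|uss i 0|) => xt ut k gap_le i.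
have := stage_ge_input (traj A B xt ut k + xss) (ut k + uss) Qpd.
have := ler_norm (stage C Q Rw (traj A B xt ut k + xss) (ut k + uss) - Css).
move: gap_le; rewrite /stage_gap -/Css => gap_le norm_ge stage_ge.
have qle : mxform Rw (ut k + uss) (ut k + uss) <= Css + c by lra.
have -> : ut k i 0 = (ut k + uss) i 0 - uss i 0 by rewrite mxE addrK.
by apply: le_trans (ler_normB _ _) _; rewrite lerD2r rP.
Qed.

(* Input sequences as points of the product space [R^(nat * 'I_m)], whose
   topology is that of pointwise convergence. *)
Definition input_of (g : {ptws nat * 'I_m -> R}) k : 'cV[R]_m :=
  \col_i g (k, i).

Lemma continuous_partial_cost xt N :
  continuous (fun g => \sum_(k < N) stage_gap xt (input_of g) k).
Proof.
have uc k : entrywise_continuous (fun g => input_of g k).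
  move=> i j; suff -> : (fun g => input_of g k i j) = proj (k, i).
    exact: proj_continuous.
  by apply: funext => g; rewrite mxE.
apply: continuous_sumr => k g.
have stage_c : continuous (fun g =>
    stage C Q Rw (traj A B xt (input_of g) k + xss) (input_of g k + uss)).
  apply: continuous_stage; apply: entrywise_continuousD => //;
    by [exact: entrywise_continuous_traj | exact: entrywise_continuous_cst].
set Css := stage C Q Rw xss uss.
apply: (continuous_comp (f := fun g => _ - Css) (g := Num.norm)); last first.
  exact: norm_continuous.
by apply: continuousB; [exact: stage_c | exact: cst_continuous].
Qed.

Lemma Jcost_minimizer xt : posdef Q -> posdef Rw -> V xt \is a fin_num ->
  exists ut, (J xt ut <= V xt)%E.
Proof.
move=> Qpd Rpd Vfin; set v := fine (V xt).
have Vv : V xt = v%:E by rewrite /v fineK.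
have [r rP] := stage_gap_input_bounded (v + 1) Qpd Rpd.
suff [g Jg] : exists g, (J xt (input_of g) <= v%:E)%E.
  by exists (input_of g); rewrite Vv.
apply: (@lsc_inf_attained_on_box _ _ (fun ki => r ki.2)
  (fun g => J xt (input_of g))
  (fun N g => \sum_(k < N) stage_gap xt (input_of g) k)).
- exact: continuous_partial_cost.
- by move=> g N; exact: Jcost_ge_partial.
- by move=> g c; exact: Jcost_le_ub_partial.
move=> e e0; have e1_gt0 : 0 < Num.min e 1 by rewrite lt_min e0 ltr01.
have [_ [ut _ <-]] := lb_ereal_inf_adherent e1_gt0 Vfin.
rewrite -/(V xt) Vv => Jut.
have Jut_le d : Num.min e 1 <= d -> (J xt ut <= (v + d)%:E)%E.
  by move=> ed; apply: le_trans (ltW Jut) _; rewrite -EFinD lee_fin lerD2l.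
have input_ofK : input_of (fun ki => ut ki.1 ki.2 0) = ut.
  by apply: funext => k; apply/matrixP => i j; rewrite mxE ord1.
exists (fun ki => ut ki.1 ki.2 0) => [[k i]|]; last first.
  by rewrite input_ofK Jut_le ?ge_min ?lexx.
apply: (rP xt ut k); rewrite -lee_fin.
apply: le_trans (stage_gap_le_Jcost xt ut k) _.
by rewrite Jut_le // ge_min lexx orbT.
Qed.

End Cost.

Theorem lemma1 (R : realType) (n m p : nat)
  (A : 'M[R]_n) (B : 'M[R]_(n, m)) (C : 'M[R]_(p, n))
  (Q : 'M[R]_p) (Rw : 'M[R]_m) (sqrtQ : 'M[R]_p)
  (rss : 'cV[R]_p) (xss : 'cV[R]_n) (uss : 'cV[R]_m) :
  posdef Q -> posdef Rw ->
  possemidef sqrtQ -> sqrtQ *m sqrtQ = Q ->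
  observable A (sqrtQ *m C) ->
  controllable A B ->
  block_mx (A - 1%:M) B C 0 *m col_mx xss uss = col_mx 0 rss ->
  let V := Vopt A B C Q Rw xss uss in
  (forall xt : 'cV[R]_n, V xt \is a fin_num) /\
  (forall xt : 'cV[R]_n,
     (exists u : 'cV[R]_m,
        V xt = ((`| stage C Q Rw (xt + xss) u - stage C Q Rw xss uss |)%:E
                + V (A *m xt + B *m (u - uss))%R)%E) /\
     (forall u : 'cV[R]_m,
        (V xt <= (`| stage C Q Rw (xt + xss) u - stage C Q Rw xss uss |)%:E
                + V (A *m xt + B *m (u - uss))%R)%E)).
Proof.
move=> Qpd Rpd _ _ _ ctrl _ V.
have Vfin xt : V xt \is a fin_num by exact: Vopt_fin_num.
split => // xt; split => [|u]; last exact: Vopt_le_bellman.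
have [ut Jut] := Jcost_minimizer Qpd Rpd (Vfin xt).
exists (ut 0%N + uss); apply/le_anti/andP; split; first exact: Vopt_le_bellman.
rewrite addrK; apply: le_trans Jut; rewrite Jcost_recl.
by rewrite leeD2l // Vopt_le_Jcost.
Qed.
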